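(* Let $\mathcal{B}$ be a pivotal bicategory, let $a,b,c,d$ be objects, and let $X\in\mathcal{B}(a,b)$ and $Y\in\mathcal{B}(c,d)$ have invertible left quantum dimensions. Then every $Z\in\mathcal{B}(a,c)$ is a retract of $Y^\dagger\otimes F\otimes X$ for some $F\in\mathcal{B}(b,d)$ (depending on $Z$), i.e. there are 2-morphisms $e:Z\to Y^\dagger\otimes F\otimes X$ and $r:Y^\dagger\otimes F\otimes X\to Z$ with $r\circ e=1_Z$.
   Context: In a bicategory $\mathcal{B}$, $I_a$ is the unit 1-morphism of $a$ and $Y\otimes X\in\mathcal{B}(a,c)$ the composite of $X\in\mathcal{B}(a,b)$, $Y\in\mathcal{B}(b,c)$. $\mathcal{B}$ has left adjoints if each $X\in\mathcal{B}(a,b)$ has $X^\dagger\in\mathcal{B}(b,a)$ with $\mathrm{ev}_X:X^\dagger\otimes X\to I_a$, $\mathrm{coev}_X:I_b\to X\otimes X^\dagger$ the counit and unit of an adjunction; it is pivotal if there are natural isomorphisms $\delta:\mathrm{Id}\Rightarrow(-)^{\dagger\dagger}$ on each $\mathcal{B}(a,b)$ compatible with $\otimes$. Set $\widetilde{\mathrm{coev}}_X=(1_{X^\dagger}\otimes\delta_X^{-1})\circ\mathrm{coev}_{X^\dagger}:I_a\to X^\dagger\otimes X$. The left quantum dimension of $X\in\mathcal{B}(a,b)$ is $\dim_{\mathrm{l}}(X)=\mathrm{ev}_X\circ\widetilde{\mathrm{coev}}_X\in\operatorname{End}(I_a)$. *)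

Set Implicit Arguments.
Unset Strict Implicit.

(* Conventions: [tens Y X] is the composite [Y (x) X] of [X : hom a b] and
   [Y : hom b c] (so it lies in [hom a c]); [vcomp g f] is vertical
   composition "g o f" of 2-morphisms; [hcomp g f : cell (Y (x) X) (Y' (x) X')]
   for [g : cell Y Y'], [f : cell X X']. *)
Record Bicat := {
  ob : Type;
  hom : ob -> ob -> Type;
  cell : forall a b : ob, hom a b -> hom a b -> Type;
  id2 : forall (a b : ob) (X : hom a b), cell X X;
  vcomp : forall (a b : ob) (X Y Z : hom a b), cell Y Z -> cell X Y -> cell X Z;
  unit1 : forall a : ob, hom a a;
  tens : forall a b c : ob, hom b c -> hom a b -> hom a c;
  hcomp : forall (a b c : ob) (Y Y' : hom b c) (X X' : hom a b),
      cell Y Y' -> cell X X' -> cell (tens Y X) (tens Y' X');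
  assoc : forall (a b c d : ob) (Z : hom c d) (Y : hom b c) (X : hom a b),
      cell (tens (tens Z Y) X) (tens Z (tens Y X));
  assoc_inv : forall (a b c d : ob) (Z : hom c d) (Y : hom b c) (X : hom a b),
      cell (tens Z (tens Y X)) (tens (tens Z Y) X);
  lunit : forall (a b : ob) (X : hom a b), cell (tens (unit1 b) X) X;
  lunit_inv : forall (a b : ob) (X : hom a b), cell X (tens (unit1 b) X);
  runit : forall (a b : ob) (X : hom a b), cell (tens X (unit1 a)) X;
  runit_inv : forall (a b : ob) (X : hom a b), cell X (tens X (unit1 a));

  vcompA : forall (a b : ob) (W X Y Z : hom a b) (h : cell Y Z) (g : cell X Y)
      (f : cell W X), vcomp h (vcomp g f) = vcomp (vcomp h g) f;
  vcomp1l : forall (a b : ob) (X Y : hom a b) (f : cell X Y), vcomp (id2 Y) f = f;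
  vcomp1r : forall (a b : ob) (X Y : hom a b) (f : cell X Y), vcomp f (id2 X) = f;
  hcomp_id : forall (a b c : ob) (Y : hom b c) (X : hom a b),
      hcomp (id2 Y) (id2 X) = id2 (tens Y X);
  hcomp_vcomp : forall (a b c : ob) (Y Y' Y'' : hom b c) (X X' X'' : hom a b)
      (g' : cell Y' Y'') (g : cell Y Y') (f' : cell X' X'') (f : cell X X'),
      hcomp (vcomp g' g) (vcomp f' f) = vcomp (hcomp g' f') (hcomp g f);
  assoc_iso1 : forall (a b c d : ob) (Z : hom c d) (Y : hom b c) (X : hom a b),
      vcomp (assoc_inv Z Y X) (assoc Z Y X) = id2 _;
  assoc_iso2 : forall (a b c d : ob) (Z : hom c d) (Y : hom b c) (X : hom a b),
      vcomp (assoc Z Y X) (assoc_inv Z Y X) = id2 _;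
  lunit_iso1 : forall (a b : ob) (X : hom a b), vcomp (lunit_inv X) (lunit X) = id2 _;
  lunit_iso2 : forall (a b : ob) (X : hom a b), vcomp (lunit X) (lunit_inv X) = id2 _;
  runit_iso1 : forall (a b : ob) (X : hom a b), vcomp (runit_inv X) (runit X) = id2 _;
  runit_iso2 : forall (a b : ob) (X : hom a b), vcomp (runit X) (runit_inv X) = id2 _;
  assoc_nat : forall (a b c d : ob) (Z Z' : hom c d) (Y Y' : hom b c) (X X' : hom a b)
      (h : cell Z Z') (g : cell Y Y') (f : cell X X'),
      vcomp (assoc Z' Y' X') (hcomp (hcomp h g) f)
      = vcomp (hcomp h (hcomp g f)) (assoc Z Y X);
  lunit_nat : forall (a b : ob) (X X' : hom a b) (f : cell X X'),
      vcomp (lunit X') (hcomp (id2 (unit1 b)) f) = vcomp f (lunit X);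
  runit_nat : forall (a b : ob) (X X' : hom a b) (f : cell X X'),
      vcomp (runit X') (hcomp f (id2 (unit1 a))) = vcomp f (runit X);
  pentagon : forall (a b c d e : ob) (W : hom d e) (Z : hom c d) (Y : hom b c)
      (X : hom a b),
      vcomp (assoc W Z (tens Y X)) (assoc (tens W Z) Y X)
      = vcomp (hcomp (id2 W) (assoc Z Y X))
          (vcomp (assoc W (tens Z Y) X) (hcomp (assoc W Z Y) (id2 X)));
  triangle : forall (a b c : ob) (Y : hom b c) (X : hom a b),
      vcomp (hcomp (id2 Y) (lunit X)) (assoc Y (unit1 b) X)
      = hcomp (runit Y) (id2 X)
}.

Arguments hom : clear implicits.
Arguments cell {B a b} : rename.
Arguments id2 {B a b} : rename.
Arguments vcomp {B a b X Y Z} : rename.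
Arguments unit1 {B} : rename.
Arguments tens {B a b c} : rename.
Arguments hcomp {B a b c Y Y' X X'} : rename.
Arguments assoc {B a b c d} : rename.
Arguments assoc_inv {B a b c d} : rename.
Arguments lunit {B a b} : rename.
Arguments lunit_inv {B a b} : rename.
Arguments runit {B a b} : rename.
Arguments runit_inv {B a b} : rename.

Record LeftAdjoints (B : Bicat) := {
  dag : forall a b : ob B, hom B a b -> hom B b a;
  ev : forall (a b : ob B) (X : hom B a b), cell (tens (dag X) X) (unit1 a);
  coev : forall (a b : ob B) (X : hom B a b), cell (unit1 b) (tens X (dag X));
  zigzag1 : forall (a b : ob B) (X : hom B a b),
      vcomp (runit X)
        (vcomp (hcomp (id2 X) (ev X))
          (vcomp (assoc X (dag X) X)
            (vcomp (hcomp (coev X) (id2 X)) (lunit_inv X)))) = id2 X;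
  zigzag2 : forall (a b : ob B) (X : hom B a b),
      vcomp (lunit (dag X))
        (vcomp (hcomp (ev X) (id2 (dag X)))
          (vcomp (assoc_inv (dag X) X (dag X))
            (vcomp (hcomp (id2 (dag X)) (coev X)) (runit_inv (dag X))))) = id2 (dag X)
}.

Arguments dag {B L a b} : rename.
Arguments ev {B L a b} : rename.
Arguments coev {B L a b} : rename.

Section DualConstructions.
Variables (B : Bicat) (L : LeftAdjoints B).

Definition mate (a b : ob B) (X X' : hom B a b) (f : cell X X') :
    cell (dag (L:=L) X') (dag (L:=L) X) :=
  vcomp (lunit (dag X))
   (vcomp (hcomp (ev X') (id2 (dag X)))
    (vcomp (hcomp (hcomp (id2 (dag X')) f) (id2 (dag X)))
     (vcomp (assoc_inv (dag X') X (dag X))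
      (vcomp (hcomp (id2 (dag X')) (coev X)) (runit_inv (dag X')))))).

Definition dag_tens (a b c : ob B) (Y : hom B b c) (X : hom B a b) :
    cell (dag (L:=L) (tens Y X)) (tens (dag (L:=L) X) (dag (L:=L) Y)) :=
  let W := dag (L:=L) (tens Y X) in
  let P := tens (dag (L:=L) X) (dag (L:=L) Y) in
  vcomp (lunit P)
  (vcomp (hcomp (ev (tens Y X)) (id2 P))
  (vcomp (assoc_inv W (tens Y X) P)
  (vcomp (hcomp (id2 W) (assoc (tens Y X) (dag X) (dag Y)))
  (vcomp (hcomp (id2 W) (hcomp (assoc_inv Y X (dag X)) (id2 (dag Y))))
  (vcomp (hcomp (id2 W) (hcomp (hcomp (id2 Y) (coev X)) (id2 (dag Y))))
  (vcomp (hcomp (id2 W) (hcomp (runit_inv Y) (id2 (dag Y))))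
  (vcomp (hcomp (id2 W) (coev Y))
         (runit_inv W)))))))).

(* Canonical 2-morphism X^dag (x) Y^dag -> (Y (x) X)^dag (inverse of the above). *)
Definition dag_tens_inv (a b c : ob B) (Y : hom B b c) (X : hom B a b) :
    cell (tens (dag (L:=L) X) (dag (L:=L) Y)) (dag (L:=L) (tens Y X)) :=
  let W := dag (L:=L) (tens Y X) in
  let P := tens (dag (L:=L) X) (dag (L:=L) Y) in
  let e : cell (tens P (tens Y X)) (unit1 a) :=
      vcomp (ev X)
      (vcomp (hcomp (id2 (dag X)) (lunit X))
      (vcomp (hcomp (id2 (dag X)) (hcomp (ev Y) (id2 X)))
      (vcomp (hcomp (id2 (dag X)) (assoc_inv (dag Y) Y X))
             (assoc (dag X) (dag Y) (tens Y X))))) in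
  vcomp (lunit W)
  (vcomp (hcomp e (id2 W))
  (vcomp (assoc_inv P (tens Y X) W)
  (vcomp (hcomp (id2 P) (coev (tens Y X)))
         (runit_inv P)))).

End DualConstructions.

Arguments mate {B L a b X X'}.
Arguments dag_tens {B L a b c}.
Arguments dag_tens_inv {B L a b c}.

(* Natural isomorphisms delta_X : X -> X^dag^dag on each hom B a b, compatible
   with (x): delta_{Y (x) X} corresponds to delta_Y (x) delta_X under the
   canonical isomorphism (Y (x) X)^dag^dag ~ Y^dag^dag (x) X^dag^dag, i.e.
   gamma_{X^dag,Y^dag} o (gamma_{Y,X}^{-1})^dag o delta_{Y (x) X}
     = delta_Y (x) delta_X. *)
Record Pivotal (B : Bicat) (L : LeftAdjoints B) := {
  delta : forall (a b : ob B) (X : hom B a b), cell X (dag (L:=L) (dag (L:=L) X));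
  delta_inv : forall (a b : ob B) (X : hom B a b), cell (dag (L:=L) (dag (L:=L) X)) X;
  delta_iso1 : forall (a b : ob B) (X : hom B a b),
      vcomp (delta_inv X) (delta X) = id2 X;
  delta_iso2 : forall (a b : ob B) (X : hom B a b),
      vcomp (delta X) (delta_inv X) = id2 _;
  delta_nat : forall (a b : ob B) (X X' : hom B a b) (f : cell X X'),
      vcomp (delta X') f = vcomp (mate (mate f)) (delta X);
  delta_tens : forall (a b c : ob B) (Y : hom B b c) (X : hom B a b),
      vcomp (dag_tens (dag X) (dag Y))
        (vcomp (mate (dag_tens_inv Y X)) (delta (tens Y X)))
      = hcomp (delta Y) (delta X)
}.

Arguments delta {B L P a b} : rename.
Arguments delta_inv {B L P a b} : rename.

Definition coev_tilde (B : Bicat) (L : LeftAdjoints B) (P : Pivotal L)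
    (a b : ob B) (X : hom B a b) : cell (unit1 a) (tens (dag (L:=L) X) X) :=
  vcomp (hcomp (id2 (dag X)) (delta_inv (P:=P) X)) (coev (dag X)).

Definition dim_l (B : Bicat) (L : LeftAdjoints B) (P : Pivotal L)
    (a b : ob B) (X : hom B a b) : cell (unit1 a) (unit1 a) :=
  vcomp (ev X) (coev_tilde P X).

Definition invertible2 (B : Bicat) (a b : ob B) (X Y : hom B a b) (f : cell X Y) : Prop :=
  exists g : cell Y X, vcomp g f = id2 X /\ vcomp f g = id2 Y.


(* When [dim_l X] is invertible, [coev_tilde X] is split by [dim_l X]^-1 o [ev X],
   so [I_a] is a retract of [X^dag (x) X]; likewise [I_c] of [Y^dag (x) Y].
   Hence [Z ~ I_c (x) Z (x) I_a] is a retract of [Y^dag (x) Y (x) Z (x) X^dag (x) X],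
   which is [Y^dag (x) F (x) X] for [F := Y (x) Z (x) X^dag]. *)

Section Retracts.
Context {B : Bicat}.

Definition retract {a b : ob B} (U V : hom B a b) : Prop :=
  exists (e : cell U V) (r : cell V U), vcomp r e = id2 U.

Lemma retract_refl {a b : ob B} (U : hom B a b) : retract U U.
Proof. exists (id2 U), (id2 U). apply vcomp1l. Qed.

Lemma retract_trans {a b : ob B} {U V W : hom B a b} :
  retract U V -> retract V W -> retract U W.
Proof.
  intros [e1 [r1 Hr1]] [e2 [r2 Hr2]].
  exists (vcomp e2 e1), (vcomp r1 r2).
  rewrite <- vcompA, (vcompA r2 e2 e1), Hr2, vcomp1l. exact Hr1.
Qed.

Lemma retract_tens {a b c : ob B} {Y Y' : hom B b c} {X X' : hom B a b} :
  retract Y Y' -> retract X X' -> retract (tens Y X) (tens Y' X').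
Proof.
  intros [e1 [r1 Hr1]] [e2 [r2 Hr2]].
  exists (hcomp e1 e2), (hcomp r1 r2).
  rewrite <- hcomp_vcomp, Hr1, Hr2. apply hcomp_id.
Qed.

Lemma retract_lunit {a b : ob B} (X : hom B a b) : retract X (tens (unit1 b) X).
Proof. exists (lunit_inv X), (lunit X). apply lunit_iso2. Qed.

Lemma retract_runit {a b : ob B} (X : hom B a b) : retract X (tens X (unit1 a)).
Proof. exists (runit_inv X), (runit X). apply runit_iso2. Qed.

Lemma retract_assoc {a b c d : ob B} (Z : hom B c d) (Y : hom B b c) (X : hom B a b) :
  retract (tens (tens Z Y) X) (tens Z (tens Y X)).
Proof. exists (assoc Z Y X), (assoc_inv Z Y X). apply assoc_iso1. Qed.

Lemma retract_assoc_inv {a b c d : ob B} (Z : hom B c d) (Y : hom B b c)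
    (X : hom B a b) :
  retract (tens Z (tens Y X)) (tens (tens Z Y) X).
Proof. exists (assoc_inv Z Y X), (assoc Z Y X). apply assoc_iso2. Qed.

Lemma retract_of_invertible_vcomp {a b : ob B} {U V : hom B a b}
    (e : cell U V) (r : cell V U) :
  invertible2 (vcomp r e) -> retract U V.
Proof.
  intros [g [Hg _]].
  exists e, (vcomp g r).
  rewrite <- vcompA. exact Hg.
Qed.

End Retracts.

Lemma unit_retract_dag_tens {B : Bicat} {L : LeftAdjoints B} {P : Pivotal L}
    {a b : ob B} {X : hom B a b} :
  invertible2 (dim_l P X) -> retract (unit1 a) (tens (dag (L:=L) X) X).
Proof. apply retract_of_invertible_vcomp. Qed.

Theorem proposition2p3 (B : Bicat) (L : LeftAdjoints B) (P : Pivotal L)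
    (a b c d : ob B) (X : hom B a b) (Y : hom B c d) :
  invertible2 (dim_l P X) -> invertible2 (dim_l P Y) ->
  forall Z : hom B a c,
    exists (F : hom B b d)
           (e : cell Z (tens (dag (L:=L) Y) (tens F X)))
           (r : cell (tens (dag (L:=L) Y) (tens F X)) Z),
      vcomp r e = id2 Z.
Proof.
  intros dimX dimY Z.
  exists (tens Y (tens Z (dag (L:=L) X))).
  change (retract Z (tens (dag (L:=L) Y) (tens (tens Y (tens Z (dag (L:=L) X))) X))).
  apply (retract_trans (retract_lunit Z)).
  apply (retract_trans (retract_tens (retract_refl (unit1 c)) (retract_runit Z))).
  apply (retract_trans (retract_tens (unit_retract_dag_tens dimY)
                          (retract_tens (retract_refl Z) (unit_retract_dag_tens dimX)))).
  apply (retract_trans (retract_assoc _ _ _)).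
  apply retract_tens; [apply retract_refl |].
  apply (retract_trans (retract_tens (retract_refl Y) (retract_assoc_inv _ _ _))).
  apply retract_assoc_inv.
Qed.
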